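(* Let $R$ be an integral domain, $q\in R^\times$, and let $(u_1,\ldots,u_r)$ and $(\tilde u_1,\ldots,\tilde u_r)$ be $r$-tuples in $R$ with $\Delta=\prod_{i>j}(u_i-u_j)\in R^\times$ and $\tilde\Delta=\prod_{i>j}(\tilde u_i-\tilde u_j)\in R^\times$. Then there is an $R$-algebra isomorphism $\mathcal H_{n,r}(R,q,\tilde u_1,\ldots,\tilde u_r)\to\mathcal H_{n,r}(R,q,u_1,\ldots,u_r)$ with $\tilde T_j\mapsto T_j$ ($1\le j\le n-1$) and $$\tilde t_i\mapsto\sum_{\mathbf k\in[1,r]^n}\tilde u_{k_i}b_{\mathbf k}=\sum_{j=0}^{r-1}a_jt_i^j\quad(1\le i\le n),$$ where $\tilde T_j,\tilde t_i$ are the defining generators of $\mathcal H_{n,r}(R,q,\tilde u_1,\ldots,\tilde u_r)$, $b_{\mathbf k}$ is formed in $\mathcal H_{n,r}(R,q,u_1,\ldots,u_r)$, and $a_0,\ldots,a_{r-1}\in R$ are determined by $\sum_{j=0}^{r-1}a_ju_m^j=\tilde u_m$ for $m=1,\ldots,r$.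
   Context: For an integral domain $R$, $q\in R^\times$ and $u_1,\ldots,u_r\in R$ with $\Delta:=\prod_{1\le j<i\le r}(u_i-u_j)\in R^\times$: for $1\le c\le r$ let $F_c(X)\in R[X]$ be the unique polynomial of degree $\le r-1$ with $F_c(u_{c'})=\delta_{c,c'}\Delta$. The modified Ariki–Koike (Shoji) algebra $\mathcal H_{n,r}(R,q,u_1,\ldots,u_r)$ is the associative $R$-algebra generated by $t_1,\ldots,t_n,T_1,\ldots,T_{n-1}$ subject to: $(T_i-q)(T_i+q^{-1})=0$; $(t_i-u_1)\cdots(t_i-u_r)=0$; $T_iT_{i+1}T_i=T_{i+1}T_iT_{i+1}$; $T_iT_j=T_jT_i$ for $|i-j|\ge2$; $t_it_j=t_jt_i$; $T_jt_k=t_kT_j$ for $k\ne j,j+1$; and for $2\le j\le n$: $T_{j-1}t_j=t_{j-1}T_{j-1}+\Delta^{-2}\sum_{1\le c_1<c_2\le r}(u_{c_2}-u_{c_1})(q-q^{-1})F_{c_1}(t_{j-1})F_{c_2}(t_j)$ and $T_{j-1}t_{j-1}=t_jT_{j-1}-\Delta^{-2}\sum_{1\le c_1<c_2\le r}(u_{c_2}-u_{c_1})(q-q^{-1})F_{c_1}(t_{j-1})F_{c_2}(t_j)$. Write $[1,r]=\{1,\ldots,r\}$ and $b_{\mathbf k}:=\prod_{i=1}^n\prod_{1\le j\le r,\,j\ne k_i}\frac{t_i-u_j}{u_{k_i}-u_j}$ for $\mathbf k=(k_1,\ldots,k_n)\in[1,r]^n$. *)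

From HB Require Import structures.
From mathcomp Require Import all_boot all_order all_algebra.
Set Implicit Arguments. Unset Strict Implicit. Unset Printing Implicit Defensive.
Import GRing.Theory.
Local Open Scope ring_scope.

Definition Delta (R : comPzRingType) (r : nat) (u : 'I_r -> R) : R :=
  \prod_(i < r) \prod_(j < r | (j < i)%N) (u i - u j).

(* F_c : the unique polynomial of degree <= r-1 with F_c(u_c') = delta_{c,c'} Delta,
   written explicitly via Lagrange interpolation (well defined when Delta is a unit). *)
Definition Fpoly (R : idomainType) (r : nat) (u : 'I_r -> R) (c : 'I_r) : {poly R} :=
  (Delta u) *: \prod_(j < r | j != c) ((u c - u j)^-1 *: ('X - (u j)%:P)).

(* Defining relations of H_{n,r}(R,q,u_1..u_r) for elements t_1..t_n, T_1..T_{n-1}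
   (1-based indices, the values outside these ranges are irrelevant). *)
Definition HRels (R : idomainType) (n r : nat) (q : R) (u : 'I_r -> R)
    (A : algType R) (t T : nat -> A) : Prop :=
  let D := Delta u in
  let F c x := horner_alg x (Fpoly u c) in
  let S j := D ^- 2 *: \sum_(c1 < r) \sum_(c2 < r | (c1 < c2)%N)
       (((u c2 - u c1) * (q - q^-1)) *: (F c1 (t j.-1) * F c2 (t j))) in
  (forall i, (1 <= i <= n.-1)%N -> (T i - q%:A) * (T i + q^-1%:A) = 0) /\
      (forall i, (1 <= i <= n)%N -> \prod_(c < r) (t i - (u c)%:A) = 0) /\
      (forall i, (1 <= i)%N -> (i.+1 <= n.-1)%N ->
          T i * T i.+1 * T i = T i.+1 * T i * T i.+1) /\
      (forall i j, (1 <= i <= n.-1)%N -> (1 <= j <= n.-1)%N -> (i.+2 <= j)%N || (j.+2 <= i)%N ->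
          T i * T j = T j * T i) /\
      (forall i j, (1 <= i <= n)%N -> (1 <= j <= n)%N -> t i * t j = t j * t i) /\
      (forall j k, (1 <= j <= n.-1)%N -> (1 <= k <= n)%N -> k != j -> k != j.+1 ->
          T j * t k = t k * T j) /\
      (forall j, (2 <= j <= n)%N ->
          T j.-1 * t j = t j.-1 * T j.-1 + S j /\
          T j.-1 * t j.-1 = t j * T j.-1 - S j).

(* (A, t, T) is a presentation of H_{n,r}(R,q,u): the generators satisfy the
   relations, and (A,t,T) is initial: for every R-algebra B with elements
   satisfying the relations there is a unique R-algebra morphism A -> B
   sending generators to the given elements. *)
Definition is_Hnr (R : idomainType) (n r : nat) (q : R) (u : 'I_r -> R)
    (A : algType R) (t T : nat -> A) : Prop :=
  HRels n q u t T /\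
  forall (B : algType R) (tB TB : nat -> B), HRels n q u tB TB ->
    (exists f : {lrmorphism A -> B},
        (forall i, (1 <= i <= n)%N -> f (t i) = tB i) /\
        (forall j, (1 <= j <= n.-1)%N -> f (T j) = TB j)) /\
    (forall f g : {lrmorphism A -> B},
        (forall i, (1 <= i <= n)%N -> f (t i) = g (t i)) ->
        (forall j, (1 <= j <= n.-1)%N -> f (T j) = g (T j)) ->
        f =1 g).

Definition bk (R : idomainType) (n r : nat) (u : 'I_r -> R) (A : algType R)
    (t : nat -> A) (k : {ffun 'I_n -> 'I_r}) : A :=
  \prod_(i < n) \prod_(j < r | j != k i) ((u (k i) - u j)^-1 *: (t i.+1 - (u j)%:A)).

From HB Require Import structures.
From mathcomp Require Import all_boot all_order all_algebra.
From mathcomp Require Import ring zify.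
Import GRing.Theory.
Local Open Scope ring_scope.
Set Implicit Arguments. Unset Strict Implicit. Unset Printing Implicit Defensive.

(* Since Delta u is a unit, each t_i is killed by prod_c (X - u_c) with invertible
   differences u_c - u_d, so the Lagrange polynomials evaluated at t_i are idempotents
   e_c(t_i) summing to 1, and g(t_i) = sum_c g(u_c) e_c(t_i) for every polynomial g.
   Take P with P(u_c) = ut_c (here P = sum_j a_j X^j).  Then P(t_i) has the same
   idempotents with eigenvalues ut_c, so the quadratic relation in t and the correction
   terms of the T-t relations, both expressed through these idempotents, transform
   into those for ut; the relation T_{j-1} t_j = t_{j-1} T_{j-1} + S itself propagates
   from t to P(t).  Likewise b_k is a product of idempotents, whence
   sum_k ut_{k_i} b_k = P(t_i).  The universal property applied to P and to an
   interpolating Q with Q(ut_c) = u_c gives mutually inverse algebra maps. *)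

Section HornerAlg.
Variables (R : comNzRingType) (A : algType R).

Lemma horner_alg_XsubC (x : A) (c : R) : horner_alg x ('X - c%:P) = x - c%:A.
Proof. by rewrite rmorphB /= horner_algX horner_algC. Qed.

Lemma horner_alg_comp (x : A) (p h : {poly R}) :
  horner_alg x (h \Po p) = horner_alg (horner_alg x p) h.
Proof.
elim/poly_ind: h => [|h c IH]; first by rewrite comp_poly0 !rmorph0.
by rewrite comp_poly_MXaddC !rmorphD !rmorphM /= IH !horner_algC horner_algX.
Qed.

Lemma lrmorph_horner_alg (B : algType R) (f : {lrmorphism A -> B}) (x : A) p :
  f (horner_alg x p) = horner_alg (f x) p.
Proof.
elim/poly_ind: p => [|p c IH]; first by rewrite !rmorph0.
by rewrite !rmorphD !rmorphM /= IH !horner_algC !horner_algX rmorph_alg.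
Qed.

Lemma commr_horner_alg (a x : A) (h : {poly R}) :
  GRing.comm a x -> GRing.comm a (horner_alg x h).
Proof.
move=> cax; elim/poly_ind: h => [|h c IH]; first by rewrite rmorph0; apply: commr0.
rewrite rmorphD rmorphM /= horner_algX horner_algC.
by apply: commrD; [apply: commrM | apply/commr_sym/comm_alg].
Qed.

Lemma comm_horner_alg (x y : A) (g h : {poly R}) :
  GRing.comm x y -> GRing.comm (horner_alg x g) (horner_alg y h).
Proof.
by move=> cxy; apply/commr_horner_alg/commr_sym/commr_horner_alg/commr_sym.
Qed.

Lemma horner_alg_sum_scaleXn (x : A) (m : nat) (a : 'I_m -> R) :
  horner_alg x (\sum_(j < m) a j *: 'X^j) = \sum_(j < m) a j *: x ^+ j.
Proof.
rewrite rmorph_sum; apply: eq_bigr => j _.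
by rewrite [LHS]linearZ /= rmorphXn /= horner_algX mulr_algl.
Qed.

End HornerAlg.

Lemma Delta_unit_subr (R : comUnitRingType) (r : nat) (u : 'I_r -> R) :
  Delta u \is a GRing.unit -> forall i j : 'I_r, i != j -> u i - u j \is a GRing.unit.
Proof.
move=> /unitr_prodP hD.
have lt_unit (i j : 'I_r) : (j < i)%N -> u i - u j \is a GRing.unit.
  move=> ji; have /unitr_prodP := hD i (mem_index_enum _) isT.
  by apply; rewrite ?mem_index_enum.
move=> i j nij; have [ji|ij] := ltnP j i; first exact: lt_unit.
rewrite -opprB unitrN; apply: lt_unit; rewrite ltn_neqAle ij andbT.
by apply: contra nij => /eqP e; apply/eqP/val_inj.
Qed.

Section Lagrange.
Variables (R : idomainType) (r : nat) (u : 'I_r -> R).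
Hypothesis hu : forall i j : 'I_r, i != j -> u i - u j \is a GRing.unit.

Let diff_neq0 i j : i != j -> u i - u j != 0.
Proof. by move=> /hu; apply: contraTneq => ->; rewrite unitr0. Qed.

Definition lagpoly (c : 'I_r) : {poly R} :=
  \prod_(j < r | j != c) ((u c - u j)^-1 *: ('X - (u j)%:P)).

Lemma lagpoly_eval c d : (lagpoly c).[u d] = (c == d)%:R.
Proof.
rewrite /lagpoly horner_prod; have [<-|ncd] := eqVneq c d.
  by apply: big1 => j hj; rewrite hornerZ hornerXsubC mulVr // hu // eq_sym.
rewrite (bigD1 d) /=; last by rewrite eq_sym.
by rewrite hornerZ hornerXsubC subrr mulr0 mul0r.
Qed.

Lemma lagpoly_interp (v : 'I_r -> R) d : (\sum_(c < r) v c *: lagpoly c).[u d] = v d.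
Proof.
rewrite horner_sum (bigD1 d) //= big1 ?addr0 => [|c ncd].
  by rewrite hornerZ lagpoly_eval eqxx mulr1.
by rewrite hornerZ lagpoly_eval (negPf ncd) mulr0.
Qed.

Lemma size_lagpoly c : (size (lagpoly c) <= r)%N.
Proof.
have nz j : j != c -> (u c - u j)^-1 != 0.
  by move=> ncj; rewrite invr_neq0 // diff_neq0 // eq_sym.
rewrite /lagpoly size_prod => [|j /nz]; last first.
  by rewrite scale_poly_eq0 negb_or -size_poly_eq0 size_XsubC andbT.
rewrite (eq_bigr (fun _ => 2%N)) => [|j /nz hj]; last by rewrite size_scale ?size_XsubC.
have r_gt0 : (0 < r)%N := leq_ltn_trans (leq0n c) (ltn_ord c).
by rewrite sum_nat_const cardC1 card_ord; lia.
Qed.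

Lemma sum_lagpoly : (0 < r)%N -> \sum_(c < r) lagpoly c = 1.
Proof.
move=> r_gt0; apply/eqP; rewrite -subr_eq0; apply/eqP.
apply: (@roots_geq_poly_eq0 _ _ [seq u i | i <- enum 'I_r]).
- apply/allP => _ /mapP [m _ ->]; rewrite /root hornerD hornerN hornerC.
  rewrite (eq_bigr (fun c => 1 *: lagpoly c)) => [|c _]; last by rewrite scale1r.
  by rewrite lagpoly_interp subrr.
- rewrite map_inj_uniq ?enum_uniq // => i j /eqP.
  by apply: contraTeq => /diff_neq0; rewrite subr_eq0.
- rewrite size_map size_enum_ord.
  apply: leq_trans (size_polyD _ _) _; rewrite geq_max size_polyN size_poly1 r_gt0 andbT.
  by apply: leq_trans (size_sum _ _ _) _; apply/bigmax_leqP => c _; apply: size_lagpoly.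
Qed.

End Lagrange.

Section LagrangeIdempotents.
Variables (R : idomainType) (r : nat) (u : 'I_r -> R) (A : algType R) (x : A).
Hypothesis hx : \prod_(c < r) (x - (u c)%:A) = 0.

Definition lagidem (c : 'I_r) : A := horner_alg x (lagpoly u c).

Lemma lagidem_prod c :
  lagidem c = \prod_(j < r | j != c) ((u c - u j)^-1 *: (x - (u j)%:A)).
Proof.
rewrite /lagidem /lagpoly rmorph_prod; apply: eq_bigr => j _.
by rewrite [LHS]linearZ /= horner_alg_XsubC mulr_algl.
Qed.

Lemma mulX_lagidem c : x * lagidem c = u c *: lagidem c.
Proof.
have XsubC_lagpoly : ('X - (u c)%:P) * lagpoly u c =
    (\prod_(j < r | j != c) (u c - u j)^-1) *: \prod_(j < r) ('X - (u j)%:P).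
  by rewrite /lagpoly scaler_prod -scalerAr; congr (_ *: _); rewrite [in RHS](bigD1 c).
apply/eqP; rewrite -subr_eq0 -mulr_algl -mulrBl -horner_alg_XsubC -rmorphM /=.
rewrite XsubC_lagpoly linearZ rmorph_prod /= (eq_bigr _ (fun j _ => horner_alg_XsubC _ _)).
by rewrite hx mulr0.
Qed.

Lemma horner_alg_mul_lagidem h c : horner_alg x h * lagidem c = h.[u c] *: lagidem c.
Proof.
elim/poly_ind: h => [|h a IH]; first by rewrite rmorph0 mul0r horner0 scale0r.
rewrite rmorphD rmorphM /= horner_algX horner_algC mulrDl -mulrA mulX_lagidem.
by rewrite -scalerAr IH scalerA mulr_algl -scalerDl hornerMXaddC mulrC.
Qed.

Lemma lagidem_mul_horner_alg h c : lagidem c * horner_alg x h = h.[u c] *: lagidem c.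
Proof. by rewrite -horner_alg_mul_lagidem /lagidem -!rmorphM mulrC. Qed.

Lemma lagidem_mulX c : lagidem c * x = u c *: lagidem c.
Proof. by rewrite -[X in _ * X](horner_algX x) lagidem_mul_horner_alg hornerX. Qed.

Hypothesis hu : forall i j : 'I_r, i != j -> u i - u j \is a GRing.unit.

Lemma sum_lagidem : \sum_(c < r) lagidem c = 1.
Proof.
rewrite /lagidem -rmorph_sum; case: r u hu x hx => [|r'] u' hu' x' hx'.
  by move: hx'; rewrite big_ord0 => /eqP; rewrite oner_eq0.
by rewrite sum_lagpoly // rmorph1.
Qed.

Lemma horner_alg_lagidem h : horner_alg x h = \sum_(c < r) h.[u c] *: lagidem c.
Proof.
rewrite -[LHS]mulr1 -sum_lagidem mulr_sumr.
by apply: eq_bigr => c _; apply: horner_alg_mul_lagidem.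
Qed.

Lemma eq_horner_alg g h : (forall c, g.[u c] = h.[u c]) -> horner_alg x g = horner_alg x h.
Proof.
by move=> eq_gh; rewrite !horner_alg_lagidem; apply: eq_bigr => c _; rewrite eq_gh.
Qed.

Lemma horner_alg_compK P Q :
  (forall c, P.[Q.[u c]] = u c) -> horner_alg (horner_alg x Q) P = x.
Proof.
move=> hPQ; rewrite -horner_alg_comp -[RHS](horner_algX x).
by apply: eq_horner_alg => c; rewrite horner_comp hPQ hornerX.
Qed.

End LagrangeIdempotents.

(* For g = 'X and lt the order on indices, this is the correction term
   Delta^-2 sum_{c1 < c2} (u_c2 - u_c1) k F_c1(x) F_c2(y) of the defining relations
   (see braid_term_lagidem). *)
Definition cross_term (R : idomainType) (r : nat) (u : 'I_r -> R) (A : algType R)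
    (k : R) (lt : rel 'I_r) (x y : A) (g : {poly R}) : A :=
  \sum_(c1 < r) \sum_(c2 < r | lt c1 c2)
     ((g.[u c2] - g.[u c1]) * k) *: (lagidem u x c1 * lagidem u y c2).

Section Reparametrization.
Variables (R : idomainType) (r : nat) (u v : 'I_r -> R) (P : {poly R}).
Hypothesis hu : forall i j : 'I_r, i != j -> u i - u j \is a GRing.unit.
Hypothesis hP : forall c, P.[u c] = v c.
Variable A : algType R.

Lemma prod_horner_alg_subr_eq0 (x : A) :
  \prod_(c < r) (x - (u c)%:A) = 0 -> \prod_(c < r) (horner_alg x P - (v c)%:A) = 0.
Proof.
move=> hx; have -> : \prod_(c < r) (horner_alg x P - (v c)%:A) =
    horner_alg x (\prod_(c < r) ('X - (v c)%:P) \Po P).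
  by rewrite horner_alg_comp rmorph_prod; apply: eq_bigr => c _; rewrite -horner_alg_XsubC.
rewrite (horner_alg_lagidem hx hu) big1 // => c _.
by rewrite horner_comp hP horner_prod (bigD1 c) //= hornerXsubC subrr mul0r scale0r.
Qed.

Hypothesis hv : forall i j : 'I_r, i != j -> v i - v j \is a GRing.unit.

Lemma lagidem_horner_alg (x : A) c :
  \prod_(c < r) (x - (u c)%:A) = 0 -> lagidem v (horner_alg x P) c = lagidem u x c.
Proof.
move=> hx; rewrite {1}/lagidem -horner_alg_comp (horner_alg_lagidem hx hu) (bigD1 c) //=.
rewrite big1 ?addr0 => [|d ndc].
  by rewrite horner_comp hP lagpoly_eval // eqxx scale1r.
by rewrite horner_comp hP lagpoly_eval // eq_sym (negPf ndc) scale0r.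
Qed.

Lemma cross_term_horner_alg (k : R) (lt : rel 'I_r) (x y : A) :
  \prod_(c < r) (x - (u c)%:A) = 0 -> \prod_(c < r) (y - (u c)%:A) = 0 ->
  cross_term u k lt x y P = \sum_(c1 < r) \sum_(c2 < r | lt c1 c2)
     ((v c2 - v c1) * k) *: (lagidem v (horner_alg x P) c1 * lagidem v (horner_alg y P) c2).
Proof.
move=> hx hy; apply: eq_bigr => c1 _; apply: eq_bigr => c2 _.
by rewrite !hP !lagidem_horner_alg.
Qed.

End Reparametrization.

Section CrossRelation.
Variables (R : idomainType) (r : nat) (u : 'I_r -> R) (A : algType R) (k : R).
Variables (x y : A).

Lemma cross_termX (lt : rel 'I_r) :
  cross_term u k lt x y 'X = \sum_(c1 < r) \sum_(c2 < r | lt c1 c2)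
     ((u c2 - u c1) * k) *: (lagidem u x c1 * lagidem u y c2).
Proof. by apply: eq_bigr => c1 _; apply: eq_bigr => c2 _; rewrite !hornerX. Qed.

(* Puts the relation for T_{j-1} t_{j-1} in the same shape as the one for T_{j-1} t_j. *)
Lemma cross_term_swap (lt : rel 'I_r) g : GRing.comm x y ->
  cross_term u k (fun c1 c2 => lt c2 c1) y x g = - cross_term u k lt x y g.
Proof.
move=> cxy; rewrite /cross_term (exchange_big_dep xpredT) //= -sumrN.
apply: eq_bigr => c1 _; rewrite -sumrN; apply: eq_bigr => c2 _.
rewrite [lagidem u y c2 * _](comm_horner_alg _ _ (commr_sym cxy)) -scaleNr.
by congr (_ *: _); ring.
Qed.

Hypotheses (hx : \prod_(c < r) (x - (u c)%:A) = 0) (hy : \prod_(c < r) (y - (u c)%:A) = 0).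
Variable (lt : rel 'I_r).
Local Notation S := (cross_term u k lt x y).

Lemma cross_term0 : S 0 = 0.
Proof.
rewrite /cross_term big1 // => c1 _; rewrite big1 // => c2 _.
by rewrite !horner0 subrr mul0r scale0r.
Qed.

Lemma cross_term_MXaddC h c : horner_alg x h * S 'X + S h * y = S (h * 'X + c%:P).
Proof.
rewrite /cross_term mulr_sumr mulr_suml -big_split; apply: eq_bigr => c1 _.
rewrite mulr_sumr mulr_suml -big_split; apply: eq_bigr => c2 _ /=.
rewrite -scalerAr mulrA (horner_alg_mul_lagidem hx) -scalerAl scalerA.
rewrite -scalerAl -(mulrA (lagidem u x c1)) (lagidem_mulX hy) -scalerAr scalerA -scalerDl.
by congr (_ *: _); rewrite !hornerMXaddC !hornerX; ring.
Qed.

Lemma cross_relation_horner_alg (T : A) :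
  T * y = x * T + S 'X -> forall g, T * horner_alg y g = horner_alg x g * T + S g.
Proof.
move=> hTy; elim/poly_ind => [|h c IH].
  by rewrite !rmorph0 mulr0 mul0r cross_term0 addr0.
rewrite -cross_term_MXaddC !rmorphD !rmorphM /= !horner_algX !horner_algC.
rewrite mulrDr mulrA IH mulrDl -mulrA hTy mulrDr mulrA mulr_algr mulrDl mulr_algl.
by rewrite -!addrA; congr (_ + _); rewrite addrA addrC.
Qed.

End CrossRelation.

Lemma braid_term_lagidem (R : idomainType) (r : nat) (v : 'I_r -> R) (A : algType R)
    (k : R) (x y : A) : Delta v \is a GRing.unit ->
  Delta v ^- 2 *: \sum_(c1 < r) \sum_(c2 < r | (c1 < c2)%N)
     (((v c2 - v c1) * k) *: (horner_alg x (Fpoly v c1) * horner_alg y (Fpoly v c2)))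
  = \sum_(c1 < r) \sum_(c2 < r | (c1 < c2)%N)
     (((v c2 - v c1) * k) *: (lagidem v x c1 * lagidem v y c2)).
Proof.
move=> hD; rewrite scaler_sumr; apply: eq_bigr => c1 _.
rewrite scaler_sumr; apply: eq_bigr => c2 _.
rewrite /Fpoly ![horner_alg _ (_ *: _)]linearZ /= !mulr_algl -scalerAl -scalerAr !scalerA.
by congr (_ *: _); rewrite -mulrA -expr2 mulrAC mulVr ?unitrX // mul1r.
Qed.

Lemma HRels_horner_alg (R : idomainType) (n r : nat) (q : R) (u v : 'I_r -> R)
    (P : {poly R}) :
  Delta u \is a GRing.unit -> Delta v \is a GRing.unit -> (forall c, P.[u c] = v c) ->
  forall (A : algType R) (t T : nat -> A),
  HRels n q u t T -> HRels n q v (fun i => horner_alg (t i) P) T.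
Proof.
move=> hDu hDv hP A t T [hT [ht [hTTT [hTT [htt [hTt hcross]]]]]].
have hu := Delta_unit_subr hDu; have hv := Delta_unit_subr hDv.
split=> //; split=> [i hi|]; first exact: prod_horner_alg_subr_eq0 (ht i hi).
do 2 split=> //; split=> [i j hi hj|]; first exact/comm_horner_alg/htt.
split=> [j l hj hl hlj hlj1|j hj]; first exact/commr_horner_alg/hTt.
have [hTy hTx] := hcross j hj.
rewrite !braid_term_lagidem // in hTy hTx *.
have hx : \prod_(c < r) (t j.-1 - (u c)%:A) = 0 by apply: ht; lia.
have hy : \prod_(c < r) (t j - (u c)%:A) = 0 by apply: ht; lia.
rewrite -(cross_termX _ _ _ _ (fun c1 c2 : 'I_r => (c1 < c2)%N)) in hTy hTx.
rewrite -!(cross_term_horner_alg hu hP hv _ _ hx hy).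
have cxy : GRing.comm (t j.-1) (t j) by apply: htt; lia.
rewrite -(cross_term_swap _ _ _ _ cxy) in hTx; rewrite -(cross_term_swap _ _ _ _ cxy).
split; exact: cross_relation_horner_alg.
Qed.

Lemma bk_lagidem (R : idomainType) (n r : nat) (u : 'I_r -> R) (A : algType R)
    (t : nat -> A) (k : {ffun 'I_n -> 'I_r}) :
  bk u t k = \prod_(i < n) lagidem u (t i.+1) (k i).
Proof. by apply: eq_bigr => i _; rewrite lagidem_prod. Qed.

Lemma sum_scale_bk (R : idomainType) (n r : nat) (u : 'I_r -> R) (A : algType R)
    (t : nat -> A) (w : 'I_r -> R) (i : 'I_n) :
  (forall i j : 'I_r, i != j -> u i - u j \is a GRing.unit) ->
  (forall i : 'I_n, \prod_(c < r) (t i.+1 - (u c)%:A) = 0) ->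
  \sum_(k : {ffun 'I_n -> 'I_r}) w (k i) *: bk u t k
    = \sum_(c < r) w c *: lagidem u (t i.+1) c.
Proof.
move=> hu ht; pose G (i' : 'I_n) c := (if i' == i then w c else 1) *: lagidem u (t i'.+1) c.
have bk_G (k : {ffun 'I_n -> 'I_r}) : w (k i) *: bk u t k = \prod_(i' < n) G i' (k i').
  by rewrite scaler_prod -big_mkcond /= big_pred1_eq bk_lagidem.
have sum_G i' : \sum_(c < r) G i' c = if i' == i then \sum_(c < r) G i c else 1.
  have [->|ni'] := eqVneq i' i; first by [].
  by rewrite /G (negPf ni') (eq_bigr _ (fun c _ => scale1r _)) sum_lagidem.
rewrite (eq_bigr _ (fun k _ => bk_G k)) -bigA_distr_bigA (eq_bigr _ (fun i' _ => sum_G i')).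
by rewrite -big_mkcond big_pred1_eq; apply: eq_bigr => c _; rewrite /G eqxx.
Qed.

Lemma is_Hnr_iso (R : idomainType) (n r : nat) (q : R) (u v : 'I_r -> R)
    (P Q : {poly R}) :
  Delta u \is a GRing.unit -> Delta v \is a GRing.unit ->
  (forall c, P.[u c] = v c) -> (forall c, Q.[v c] = u c) ->
  forall (A : algType R) (tA TA : nat -> A) (B : algType R) (tB TB : nat -> B),
  is_Hnr n q v tA TA -> is_Hnr n q u tB TB ->
  exists f : {lrmorphism A -> B}, [/\ bijective f,
    forall i, (1 <= i <= n)%N -> f (tA i) = horner_alg (tB i) P &
    forall j, (1 <= j <= n.-1)%N -> f (TA j) = TB j].
Proof.
move=> hDu hDv hP hQ A tA TA B tB TB [relA univA] [relB univB].
have [_ [rootA _]] := relA; have [_ [rootB _]] := relB.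
have [[f [ft fT]] _] := univA B _ _ (HRels_horner_alg hDu hDv hP relB).
have [[g [gt gT]] _] := univB A _ _ (HRels_horner_alg hDv hDu hQ relA).
have [_ uniqA] := univA A tA TA relA; have [_ uniqB] := univB B tB TB relB.
exists f; split=> //; exists g.
  apply: (uniqA (g \o f) idfun) => [i hi|j hj] /=; last by rewrite fT // gT.
  rewrite ft // lrmorph_horner_alg gt //.
  by apply: (horner_alg_compK (rootA i hi) (Delta_unit_subr hDv)) => c; rewrite hQ hP.
apply: (uniqB (f \o g) idfun) => [i hi|j hj] /=; last by rewrite gT // fT.
rewrite gt // lrmorph_horner_alg ft //.
by apply: (horner_alg_compK (rootB i hi) (Delta_unit_subr hDu)) => c; rewrite hP hQ.
Qed.

Unset Implicit Arguments.

Theorem corollary3p14 (R : idomainType) (n r : nat) (q : R) (u ut : 'I_r -> R)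
  (hq : q \is a GRing.unit)
  (hD : Delta u \is a GRing.unit) (hDt : Delta ut \is a GRing.unit)
  (Ht : algType R) (tt TT : nat -> Ht) (hHt : is_Hnr n q ut tt TT)
  (H : algType R) (t T : nat -> H) (hH : is_Hnr n q u t T)
  (a : 'I_r -> R) (ha : forall m : 'I_r, \sum_(j < r) a j * u m ^+ j = ut m) :
  exists f : {lrmorphism Ht -> H},
    bijective f /\
    (forall j, (1 <= j <= n.-1)%N -> f (TT j) = T j) /\
    (forall i : 'I_n,
        f (tt i.+1) = \sum_(k : {ffun 'I_n -> 'I_r}) ut (k i) *: bk u t k /\
        \sum_(k : {ffun 'I_n -> 'I_r}) ut (k i) *: bk u t k
          = \sum_(j < r) a j *: t i.+1 ^+ j).
Proof.
have hu := Delta_unit_subr hD.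
pose P := \sum_(j < r) a j *: 'X^j.
have hP m : P.[u m] = ut m.
  by rewrite -ha horner_sum; apply: eq_bigr => j _; rewrite hornerZ hornerXn.
have hQ := lagpoly_interp (Delta_unit_subr hDt) u.
have [f [bij_f ft fT]] := is_Hnr_iso hD hDt hP hQ hHt hH.
exists f; do 2 split=> //; move=> i.
have [[_ [troot _]] _] := hH.
have troot' (i' : 'I_n) : \prod_(c < r) (t i'.+1 - (u c)%:A) = 0.
  by apply: troot; rewrite /= ltn_ord.
have bk_P : \sum_(k : {ffun 'I_n -> 'I_r}) ut (k i) *: bk u t k = horner_alg (t i.+1) P.
  rewrite (sum_scale_bk _ _ hu troot') (horner_alg_lagidem (troot' i) hu).
  by apply: eq_bigr => c _; rewrite hP.
by rewrite bk_P ft /= ?ltn_ord // horner_alg_sum_scaleXn.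
Qed.
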